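(* Let $D\ge1$, let $Q_D$ be the $D$-dimensional hypercube on $X=\{0,1\}^D$ with adjacency matrix $A$. The set $$\{I,\alpha_1,\ldots,\alpha_D\}\cup\{\alpha^*_iA\alpha^*_j-\alpha^*_jA\alpha^*_i\mid 1\le i<j\le D\}$$ is a basis for the space of $A$-like matrices of $Q_D$. In particular this space has dimension $1+D+\binom{D}{2}$.
   Context: $Q_D$ is the graph with vertex set $X=\{0,1\}^D$, two vertices adjacent iff they differ in exactly one coordinate. Matrices are real with rows and columns indexed by $X$; $I$ is the identity. A matrix $B$ is $A$-like if $BA=AB$ and $B_{xy}=0$ for all $x,y\in X$ that are neither equal nor adjacent. For $1\le i\le D$, $\alpha_i$ has $(x,y)$-entry $1$ if $x,y$ differ in the $i$-th coordinate and agree in all others, and $0$ otherwise; $\alpha^*_i$ is the diagonal matrix with $(x,x)$-entry $1$ if $x_i=0$ and $-1$ if $x_i=1$. *)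

From HB Require Import structures.
From mathcomp Require Import all_boot all_order all_algebra.
Unset Printing Implicit Defensive.
Import Order.TTheory GRing.Theory Num.Theory.
Local Open Scope ring_scope.

(* Vertex set X = {0,1}^D, coordinates indexed by 'I_D (coordinate i+1 of the
   paper is index i here); false = 0, true = 1. *)
Definition cube (D : nat) : finType := {ffun 'I_D -> bool}.

(* Number of vertices; matrices indexed by X are 'M_(nv D), the vertex x
   corresponding to the row/column index enum_rank x. *)
Definition nv (D : nat) : nat := #|{: cube D}|.

Definition vx {D : nat} (i : 'I_(nv D)) : cube D := enum_val i.
Definition ix {D : nat} (x : cube D) : 'I_(nv D) := enum_rank x.

Definition adjacent {D : nat} (x y : cube D) : bool :=
  #|[set k : 'I_D | x k != y k]| == 1%N.

Definition adjA (R : realFieldType) (D : nat) : 'M[R]_(nv D) :=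
  \matrix_(i, j) (if adjacent (vx i) (vx j) then 1 else 0).

Definition A_like (R : realFieldType) (D : nat) (B : 'M[R]_(nv D)) : Prop :=
  B *m adjA R D = adjA R D *m B /\
  (forall x y : cube D, x != y -> ~~ adjacent x y -> B (ix x) (ix y) = 0).

Definition alpha (R : realFieldType) (D : nat) (i : 'I_D) : 'M[R]_(nv D) :=
  \matrix_(a, b)
    (if (vx a i != vx b i) && [forall k, (k != i) ==> (vx a k == vx b k)]
     then 1 else 0).

Definition alphas (R : realFieldType) (D : nat) (i : 'I_D) : 'M[R]_(nv D) :=
  \matrix_(a, b) (if a == b then (if vx a i then -1 else 1) else 0).

Definition commAs (R : realFieldType) (D : nat) (i j : 'I_D) : 'M[R]_(nv D) :=
  alphas R D i *m adjA R D *m alphas R D j - alphas R D j *m adjA R D *m alphas R D i.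

Definition cube_basis (R : realFieldType) (D : nat) : seq 'M[R]_(nv D) :=
  [:: 1%:M] ++ [seq alpha R D i | i <- enum 'I_D]
  ++ [seq commAs R D i j | i : 'I_D <- enum 'I_D, j : 'I_D <- [seq j : 'I_D <- enum 'I_D | (i < j)%N]].

From HB Require Import structures.
From mathcomp Require Import all_boot all_order all_algebra.
From mathcomp Require Import lra zify.
Import Order.TTheory GRing.Theory Num.Theory.
Local Open Scope ring_scope.
Set Implicit Arguments. Unset Strict Implicit.

(* An A-like matrix B vanishes outside the diagonal and the edges, and reading
   BA = AB at pairs of vertices at distance 1, 0 and 2 shows: the diagonal of B
   is constant, the edge weights f_k(x) = B(x, x + e_k) satisfy
   sum_k f_k(x) = sum_k f_k(x + e_k), and
   f_i(x) + f_j(x) = f_j(x + e_i) + f_i(x + e_j).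
   By the last relation, f_i(x + e_j) - f_i(x) only changes sign under flips,
   and then the first one forces every f_i to be constant.  So B is determined
   by the 1 + D + C(D,2) numbers B(0,0), f_m(0) and f_m(e_p) - f_m(0) for
   m < p.  On these data I, alpha_m and the commutator of (m, p) act
   triangularly (the commutator contributes -4 at its own pair and 0 at the
   other pairs), hence they span the A-like matrices and are independent. *)

Section Cube.
Variable D : nat.
Implicit Types x y : cube D.

Definition flip x (k : 'I_D) : cube D := [ffun l => if l == k then ~~ x l else x l].
Definition cube0 : cube D := [ffun _ => false].

Lemma flipE x k l : flip x k l = if l == k then ~~ x l else x l.
Proof. by rewrite ffunE. Qed.

Lemma flipK k : involutive (flip^~ k).
Proof. by move=> x; apply/ffunP=> l; rewrite !flipE; case: eqP; rewrite ?negbK. Qed.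

Lemma flipC x i j : flip (flip x i) j = flip (flip x j) i.
Proof. by apply/ffunP=> l; rewrite !flipE; case: (l == i); case: (l == j). Qed.

Lemma flip_eq x y k : (flip x k == y) = (x == flip y k).
Proof. by apply/eqP/eqP => [<-|->]; rewrite flipK. Qed.

Lemma flip_neq x k : flip x k != x.
Proof. by apply/eqP => /ffunP /(_ k); rewrite flipE eqxx; case: (x k). Qed.

Lemma flip_inj x : injective (flip x).
Proof.
move=> i j /ffunP /(_ i); rewrite !flipE eqxx.
by case: eqVneq => // _; case: (x i).
Qed.

Lemma cube_ind (P : cube D -> Prop) :
  P cube0 -> (forall x k, P x -> P (flip x k)) -> forall x, P x.
Proof.
move=> P0 Pflip.
suff PS : forall (s : seq 'I_D) x, (forall k, x k -> k \in s) -> P x.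
  by move=> x; apply: (PS (enum 'I_D)) => k _; rewrite mem_enum.
elim=> [|k s IHs] x supp_x.
  suff -> : x = cube0 by [].
  by apply/ffunP=> l; rewrite ffunE; case: (boolP (x l)) => // /supp_x.
case: (boolP (x k)) => xk.
  rewrite -(flipK k x); apply/Pflip/IHs => l; rewrite flipE.
  case: eqVneq => [-> | lk]; first by rewrite xk.
  by move/supp_x; rewrite inE (negPf lk).
apply: IHs => l xl; move: (supp_x l xl); rewrite inE.
by case: eqVneq => // El; rewrite -El xl in xk.
Qed.

Lemma adjacentP x y : reflect (exists k, y = flip x k) (adjacent x y).
Proof.
apply: (iffP cards1P) => [[k Hk]|[k ->]]; last first.
  by exists k; apply/setP => l; rewrite !inE flipE; case: (l == k); case: (x l).
exists k; apply/ffunP => l; have /setP /(_ l) := Hk; rewrite !inE flipE.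
by case: (l == k); case: (x l); case: (y l).
Qed.

Lemma adjacent_flip x k : adjacent x (flip x k).
Proof. by apply/adjacentP; exists k. Qed.

Lemma nonadjacent_flipF x y k : ~~ adjacent x y -> (y == flip x k) = false.
Proof. by apply: contraNF => /eqP->; apply: adjacent_flip. Qed.

Lemma adjacent_sym x y : adjacent x y = adjacent y x.
Proof. by apply/adjacentP/adjacentP => -[k ->]; exists k; rewrite flipK. Qed.

End Cube.

Section Entries.
Variables (R : realFieldType) (D : nat).
Implicit Types (x y z : cube D) (B C : 'M[R]_(nv D)).

Lemma vxK : cancel (@vx D) (@ix D). Proof. exact: enum_valK. Qed.
Lemma ixK : cancel (@ix D) (@vx D). Proof. exact: enum_rankK. Qed.

Lemma ix_eq x y : (ix x == ix y) = (x == y).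
Proof. exact: (can_eq ixK). Qed.

Lemma sum_cube (F : 'I_(nv D) -> R) : \sum_a F a = \sum_x F (ix x).
Proof. by apply: reindex; exists (@vx D) => a _; rewrite ?ixK ?vxK. Qed.

Lemma cube_matrix_eq B C : (forall x y, B (ix x) (ix y) = C (ix x) (ix y)) -> B = C.
Proof. by move=> BC; apply/matrixP => a b; rewrite -(vxK a) -(vxK b). Qed.

Lemma sum_adjacent (G : cube D -> R) z :
  \sum_y (if adjacent y z then G y else 0) = \sum_k G (flip z k).
Proof.
rewrite -big_mkcond -[RHS](big_imset _ (in2W (@flip_inj D z))) /=.
apply: eq_bigl => y; rewrite adjacent_sym.
by apply/adjacentP/imsetP => -[k]; [exists k | exists k].
Qed.

Lemma adjA_E x y : adjA R D (ix x) (ix y) = (adjacent x y)%:R.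
Proof. by rewrite mxE !ixK; case: adjacent. Qed.

Lemma mulmx_adjA_E B x z :
  (B *m adjA R D) (ix x) (ix z) = \sum_k B (ix x) (ix (flip z k)).
Proof.
rewrite mxE sum_cube -(sum_adjacent (fun y => B (ix x) (ix y))).
by apply: eq_bigr => y _; rewrite adjA_E; case: adjacent; rewrite ?mulr1 ?mulr0.
Qed.

Lemma mul_adjA_mx_E B x z :
  (adjA R D *m B) (ix x) (ix z) = \sum_k B (ix (flip x k)) (ix z).
Proof.
rewrite mxE sum_cube -(sum_adjacent (fun y => B (ix y) (ix z))).
by apply: eq_bigr => y _; rewrite adjA_E adjacent_sym; case: adjacent; rewrite ?mul1r ?mul0r.
Qed.

Lemma adjA_commuteP B : B *m adjA R D = adjA R D *m B <->
  (forall x z, \sum_k B (ix x) (ix (flip z k)) = \sum_k B (ix (flip x k)) (ix z)).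
Proof.
split=> [BA x z | BA]; first by rewrite -mulmx_adjA_E BA mul_adjA_mx_E.
by apply: cube_matrix_eq => x z; rewrite mulmx_adjA_E mul_adjA_mx_E.
Qed.

Lemma A_like0 : A_like R D 0.
Proof. by split=> [|x y _ _]; rewrite ?mul0mx ?mulmx0 ?mxE. Qed.

Lemma A_likeD B C : A_like R D B -> A_like R D C -> A_like R D (B + C).
Proof.
move=> [BA B0] [CA C0]; split; first by rewrite mulmxDl mulmxDr BA CA.
by move=> x y xy nxy; rewrite mxE B0 // C0 // addr0.
Qed.

Lemma A_likeZ c B : A_like R D B -> A_like R D (c *: B).
Proof.
move=> [BA B0]; split; first by rewrite -scalemxAl -scalemxAr BA.
by move=> x y xy nxy; rewrite mxE B0 // mulr0.
Qed.

Lemma A_like_sum (I : Type) (r : seq I) (P : pred I) (F : I -> 'M[R]_(nv D)) :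
  (forall i, P i -> A_like R D (F i)) -> A_like R D (\sum_(i <- r | P i) F i).
Proof. by move=> FA; apply: big_ind => //; [exact: A_like0 | exact: A_likeD]. Qed.

Definition diag_ent B x := B (ix x) (ix x).
Definition edge_ent B k x := B (ix x) (ix (flip x k)).
Definition edge_var B i j x := edge_ent B i (flip x j) - edge_ent B i x.

End Entries.

Lemma big_pair (I : finType) (V : nmodType) (F : I -> V) i j : i != j ->
  (forall k, k != i -> k != j -> F k = 0) -> \sum_k F k = F i + F j.
Proof.
move=> ij Fij; rewrite (bigD1 i) // (bigD1 j) 1?eq_sym //= big1 ?addr0 //.
by move=> k /andP[ki kj]; apply: Fij.
Qed.

Section ALike.
Variables (R : realFieldType) (D : nat) (B : 'M[R]_(nv D)).
Hypothesis B_A_like : A_like R D B.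
Implicit Types x y : cube D.

Lemma A_like_far x y i j : i != j -> x i != y i -> x j != y j -> B (ix x) (ix y) = 0.
Proof.
move=> ij xyi xyj; apply: B_A_like.2; first by apply: contraNneq xyi => ->.
apply/negP => /adjacentP[k yE]; move: xyi xyj; rewrite yE !flipE.
by case: (eqVneq i k) => [<-|]; rewrite ?eqxx // (eq_sym j) (negPf ij) eqxx.
Qed.

Lemma A_like_flip2 x i j : i != j -> B (ix x) (ix (flip (flip x i) j)) = 0.
Proof.
move=> ij; apply: (A_like_far ij); rewrite !flipE eqxx ?(eq_sym j i) (negPf ij);
  by case: (x _).
Qed.

Lemma A_like_comm x z :
  \sum_k B (ix x) (ix (flip z k)) = \sum_k B (ix (flip x k)) (ix z).
Proof. exact: (adjA_commuteP B).1 B_A_like.1 x z. Qed.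

Lemma diag_ent_flip x i : diag_ent B (flip x i) = diag_ent B x.
Proof.
rewrite /diag_ent; have := A_like_comm x (flip x i).
rewrite (bigD1 i) // [RHS](bigD1 i) //= flipK.
rewrite !big1 ?addr0 => [<- // | k ki | k ki]; last by rewrite A_like_flip2 // eq_sym.
by rewrite -[X in flip X i](flipK k x) A_like_flip2.
Qed.

Lemma edge_ent_sum x : \sum_k edge_ent B k x = \sum_k edge_ent B k (flip x k).
Proof. by rewrite A_like_comm; apply: eq_bigr => k _; rewrite /edge_ent flipK. Qed.

Lemma edge_ent_square x i j : i != j ->
  edge_ent B i x + edge_ent B j x = edge_ent B j (flip x i) + edge_ent B i (flip x j).
Proof.
move=> ij; have ji : j != i by rewrite eq_sym.
have := A_like_comm x (flip (flip x i) j).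
have far k : k != i -> k != j -> B (ix x) (ix (flip (flip (flip x i) j) k)) = 0
    /\ B (ix (flip x k)) (ix (flip (flip x i) j)) = 0.
  move=> ki kj; have [ik jk] : i != k /\ j != k by rewrite eq_sym ki eq_sym kj.
  split; apply: (A_like_far ij);
  by rewrite !flipE ?eqxx ?(negPf ij) ?(negPf ji) ?(negPf ik) ?(negPf jk); case: (x _).
rewrite (big_pair ij) => [|k ki kj]; last exact: (far k ki kj).1.
rewrite [RHS](big_pair ij) => [|k ki kj]; last exact: (far k ki kj).2.
rewrite flipK [flip (flip x i) j]flipC flipK /edge_ent [flip (flip x j) i]flipC.
by move=> <-; rewrite addrC.
Qed.

Lemma edge_varC x i j : i != j -> edge_var B i j x = - edge_var B j i x.
Proof. by move=> ij; have := edge_ent_square x ij; rewrite /edge_var; lra. Qed.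

Lemma edge_var_flip x i j l : i != j ->
  edge_var B i j (flip x l) = (if (l == i) || (l == j) then -1 else 1) * edge_var B i j x.
Proof.
move=> ij; rewrite /edge_var; case: (eqVneq l j) => [->|lj]; first by rewrite orbT flipK; lra.
case: (eqVneq l i) => [->|li] /=.
  by have := edge_ent_square (flip x i) ij; have := edge_ent_square x ij; rewrite flipK; lra.
have jl : j != l by rewrite eq_sym.
have := edge_ent_square x ij; have := edge_ent_square x jl; have := edge_ent_square x li.
have := edge_ent_square (flip x l) ij; have := edge_ent_square (flip x i) jl.
have := edge_ent_square (flip x j) li.
rewrite [flip (flip x l) i]flipC [flip (flip x l) j]flipC [flip (flip x j) i]flipC; lra.
Qed.

Section Uniqueness.
Hypothesis edge_var0 : forall m p : 'I_D, (m < p)%N -> edge_var B m p (cube0 D) = 0.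

Lemma edge_var_eq0 x i j : i != j -> edge_var B i j x = 0.
Proof.
move=> ij; elim/cube_ind: x => [|x l]; last by rewrite edge_var_flip // => ->; rewrite mulr0.
move: (ij); rewrite neq_ltn => /orP[lt_ij | lt_ji]; first exact: edge_var0.
by rewrite edge_varC // edge_var0 ?oppr0.
Qed.

Lemma edge_ent_flip_neq x i l : l != i -> edge_ent B i (flip x l) = edge_ent B i x.
Proof. by rewrite eq_sym => il; have := edge_var_eq0 x il; rewrite /edge_var; lra. Qed.

Lemma edge_ent_flip x i : edge_ent B i (flip x i) = edge_ent B i x.
Proof.
(* rho k changes sign under a flip in direction k and no other flip moves it. *)
pose rho k y := edge_ent B k (flip y k) - edge_ent B k y.
have rho_sum y : \sum_k rho k y = 0 by rewrite sumrB edge_ent_sum subrr.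
have rho_flip k : k != i -> rho k (flip x i) = rho k x.
  by rewrite eq_sym => ik; rewrite /rho flipC !(edge_ent_flip_neq _ ik).
have := rho_sum (flip x i); have := rho_sum x.
rewrite (bigD1 i) // [in X in _ -> X -> _](bigD1 i) //= (eq_bigr _ rho_flip).
by rewrite /rho flipK; lra.
Qed.

Lemma edge_ent_const x i : edge_ent B i x = edge_ent B i (cube0 D).
Proof.
elim/cube_ind: x => // x l <-.
by case: (eqVneq l i) => [->|li]; rewrite ?edge_ent_flip ?edge_ent_flip_neq.
Qed.

Lemma A_like_eq0 :
  diag_ent B (cube0 D) = 0 -> (forall m, edge_ent B m (cube0 D) = 0) -> B = 0.
Proof.
move=> diag0 edge0; apply: cube_matrix_eq => x y; rewrite mxE.
have [<-|xy] := eqVneq x y.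
  by change (diag_ent B x = 0); elim/cube_ind: x => // x k; rewrite diag_ent_flip.
have [/adjacentP[k ->]|/(B_A_like.2 _ _ xy) //] := boolP (adjacent x y).
by have := edge_ent_const x k; rewrite edge0.
Qed.

End Uniqueness.
End ALike.

Lemma A_like_eq (R : realFieldType) (D : nat) (B C : 'M[R]_(nv D)) :
  A_like R D B -> A_like R D C -> diag_ent B (cube0 D) = diag_ent C (cube0 D) ->
  (forall m, edge_ent B m (cube0 D) = edge_ent C m (cube0 D)) ->
  (forall m p : 'I_D, (m < p)%N -> edge_var B m p (cube0 D) = edge_var C m p (cube0 D)) ->
  B = C.
Proof.
move=> B_A C_A eq_diag eq_edge eq_var; apply/eqP; rewrite -subr_eq0; apply/eqP.
have BC_A : A_like R D (B - C) by rewrite -scaleN1r; apply/A_likeD/A_likeZ.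
apply: A_like_eq0 => // [m p /eq_var | | m]; rewrite /edge_var /edge_ent /diag_ent !mxE.
- by rewrite /edge_var /edge_ent => eq_mp; lra.
- by move: eq_diag; rewrite /diag_ent; lra.
- by move: (eq_edge m); rewrite /edge_ent; lra.
Qed.

Section BasisEntries.
Variables (R : realFieldType) (D : nat).
Implicit Types (x y : cube D) (B C : 'M[R]_(nv D)).

Definition sg (i : 'I_D) x : R := if x i then -1 else 1.

Lemma sg_flip i k x : sg i (flip x k) = if i == k then - sg i x else sg i x.
Proof. by rewrite /sg flipE; case: (i == k); case: (x i); rewrite ?opprK. Qed.

Lemma sg_cube0 i : sg i (cube0 D) = 1.
Proof. by rewrite /sg ffunE. Qed.

Lemma one_E x y : (1%:M : 'M[R]_(nv D)) (ix x) (ix y) = (x == y)%:R.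
Proof. by rewrite mxE ix_eq. Qed.

Lemma alpha_E i x y : alpha R D i (ix x) (ix y) = (y == flip x i)%:R.
Proof.
rewrite mxE !ixK.
suff -> : (x i != y i) && [forall k, (k != i) ==> (x k == y k)] = (y == flip x i).
  by case: (_ == _).
apply/andP/eqP => [[xyi /forallP xy] | ->].
  apply/ffunP => l; rewrite flipE; case: eqVneq => [->|li].
    by move: xyi; case: (x i); case: (y i).
  by apply/esym/eqP; have /implyP := xy l; apply.
rewrite flipE eqxx; split; first by case: (x i).
by apply/forallP => l; apply/implyP => li; rewrite flipE (negPf li).
Qed.

Lemma alphas_mulmx_E i C x y : (alphas R D i *m C) (ix x) (ix y) = sg i x * C (ix x) (ix y).
Proof.
rewrite mxE sum_cube (bigD1 x) //= big1 => [|z zx].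
  by rewrite mxE eqxx ixK addr0.
by rewrite mxE ix_eq eq_sym (negPf zx) mul0r.
Qed.

Lemma mulmx_alphas_E i C x y : (C *m alphas R D i) (ix x) (ix y) = C (ix x) (ix y) * sg i y.
Proof.
rewrite mxE sum_cube (bigD1 y) //= big1 => [|z zy].
  by rewrite mxE eqxx ixK addr0.
by rewrite mxE ix_eq (negPf zy) mulr0.
Qed.

Lemma commAs_E i j x y : commAs R D i j (ix x) (ix y) =
  2 * (sg i x * sg j x) * ((y == flip x i)%:R - (y == flip x j)%:R).
Proof.
rewrite mxE [X in _ + X]mxE !mulmx_alphas_E !alphas_mulmx_E adjA_E.
have [/adjacentP[k ->]|xy] := boolP (adjacent x y).
  rewrite !(inj_eq (@flip_inj D x)) !sg_flip.
  by case: (eqVneq i k) => _; case: (eqVneq j k) => _ /=; lra.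
by rewrite !nonadjacent_flipF //=; lra.
Qed.
End BasisEntries.

Section BasisALike.
Variables (R : realFieldType) (D : nat).
Implicit Types (B C : 'M[R]_(nv D)).

Lemma A_like1 : A_like R D 1%:M.
Proof.
split; first by apply/adjA_commuteP => x z; apply: eq_bigr => k _; rewrite !one_E flip_eq.
by move=> x y xy _; rewrite one_E (negPf xy).
Qed.

Lemma A_like_alpha i : A_like R D (alpha R D i).
Proof.
split.
  by apply/adjA_commuteP => x z; apply: eq_bigr => k _; rewrite !alpha_E flip_eq flipC.
by move=> x y _ nxy; rewrite alpha_E nonadjacent_flipF.
Qed.

Lemma A_like_commAs i j : A_like R D (commAs R D i j).
Proof.
have [<-|ij] := eqVneq i j; first by rewrite /commAs subrr; exact: A_like0.
have ji : j != i by rewrite eq_sym.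
split; last by move=> x y _ nxy; rewrite commAs_E !nonadjacent_flipF // subrr mulr0.
apply/adjA_commuteP => x z; apply/eqP; rewrite -subr_eq0 -sumrB; apply/eqP.
rewrite (big_pair ij) => [|k ki kj]; rewrite !commAs_E !flip_eq !sg_flip.
  by rewrite !flipK !eqxx (negPf ij) (negPf ji) [flip (flip x j) i]flipC; lra.
rewrite (eq_sym i) (negPf ki) (eq_sym j) (negPf kj).
by rewrite [flip (flip x i) k]flipC [flip (flip x j) k]flipC subrr.
Qed.

End BasisALike.

Section Combination.
Variables (R : realFieldType) (D : nat).
Local Notation M := 'M[R]_(nv D).
Local Notation z0 := (cube0 D).
Implicit Types (x : cube D) (B C : M) (a : 'I_D -> R) (g : 'I_D -> 'I_D -> R).

Definition alpha_comb (c0 : R) a : M := c0 *: 1%:M + \sum_k a k *: alpha R D k.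
Definition commAs_comb g : M :=
  \sum_(i : 'I_D) \sum_(j : 'I_D | (i < j)%N) g i j *: commAs R D i j.
Definition basis_comb (c0 : R) a g : M := alpha_comb c0 a + commAs_comb g.

Lemma alpha_comb_E c0 a x y : alpha_comb c0 a (ix x) (ix y) =
  c0 * (x == y)%:R + \sum_k a k * (y == flip x k)%:R.
Proof.
rewrite [LHS]mxE [X in X + _]mxE one_E summxE; congr (_ + _).
by apply: eq_bigr => k _; rewrite mxE alpha_E.
Qed.

Lemma diag_ent_alpha_comb c0 a x : diag_ent (alpha_comb c0 a) x = c0.
Proof.
rewrite /diag_ent alpha_comb_E eqxx mulr1 big1 ?addr0 // => k _.
by rewrite eq_sym (negPf (flip_neq _ _)) mulr0.
Qed.

Lemma edge_ent_alpha_comb c0 a m x : edge_ent (alpha_comb c0 a) m x = a m.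
Proof.
rewrite /edge_ent alpha_comb_E eq_sym (negPf (flip_neq _ _)) mulr0 add0r.
rewrite (bigD1 m) //= eqxx mulr1 big1 ?addr0 // => k km.
by rewrite (inj_eq (@flip_inj D x)) eq_sym (negPf km) mulr0.
Qed.

Lemma commAs_comb_E g u v :
  commAs_comb g u v = \sum_(i : 'I_D) \sum_(j : 'I_D | (i < j)%N) g i j * commAs R D i j u v.
Proof.
by rewrite summxE; apply: eq_bigr => i _; rewrite summxE; apply: eq_bigr => j _; rewrite mxE.
Qed.

Lemma diag_ent_commAs_comb g x : diag_ent (commAs_comb g) x = 0.
Proof.
rewrite /diag_ent commAs_comb_E big1 // => i _; rewrite big1 // => j _.
by rewrite commAs_E !(eq_sym x) !(negPf (flip_neq _ _)) subrr !mulr0.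
Qed.

Lemma edge_var_commAs (i j m p : 'I_D) : (i < j)%N -> (m < p)%N ->
  edge_var (commAs R D i j) m p z0 = if (i == m) && (j == p) then -4 else 0.
Proof.
move=> lt_ij lt_mp; rewrite /edge_var /edge_ent !commAs_E !(inj_eq (@flip_inj D _)).
rewrite !sg_flip !sg_cube0 -!val_eqE /=.
case: (eqVneq (val i) m) lt_ij => [-> | _] lt_ij.
  by rewrite (ltn_eqF lt_mp) (ltn_eqF lt_ij) /=; case: (_ == _); lra.
case: (eqVneq (val j) m) lt_ij => [-> | _] lt_ij.
  by rewrite (ltn_eqF (ltn_trans lt_ij lt_mp)) (ltn_eqF lt_mp) /=; lra.
by rewrite /=; lra.
Qed.

Lemma edge_var_commAs_comb g (m p : 'I_D) : (m < p)%N ->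
  edge_var (commAs_comb g) m p z0 = -4 * g m p.
Proof.
move=> lt_mp.
have -> : edge_var (commAs_comb g) m p z0 =
    \sum_(i : 'I_D) \sum_(j : 'I_D | (i < j)%N) g i j * edge_var (commAs R D i j) m p z0.
  rewrite /edge_var /edge_ent !commAs_comb_E -sumrB; apply: eq_bigr => i _.
  by rewrite -sumrB; apply: eq_bigr => j _; rewrite mulrBr.
rewrite (bigD1 m) //= [X in _ + X]big1 ?addr0 => [|i im]; last first.
  by rewrite big1 // => j lt_ij; rewrite edge_var_commAs // (negPf im) mulr0.
rewrite (bigD1 p) //= [X in _ + X]big1 ?addr0 => [|j /andP[lt_mj jp]]; last first.
  by rewrite edge_var_commAs // eqxx (negPf jp) mulr0.
by rewrite edge_var_commAs // !eqxx mulrC.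
Qed.

Lemma diag_entD B C x : diag_ent (B + C) x = diag_ent B x + diag_ent C x.
Proof. by rewrite /diag_ent mxE. Qed.

Lemma edge_entD B C k x : edge_ent (B + C) k x = edge_ent B k x + edge_ent C k x.
Proof. by rewrite /edge_ent mxE. Qed.

Lemma edge_varD B C i j x : edge_var (B + C) i j x = edge_var B i j x + edge_var C i j x.
Proof. by rewrite /edge_var !edge_entD addrACA opprD. Qed.

Lemma diag_ent_basis_comb c0 a g x : diag_ent (basis_comb c0 a g) x = c0.
Proof. by rewrite diag_entD diag_ent_alpha_comb diag_ent_commAs_comb addr0. Qed.

Lemma edge_ent_basis_comb c0 a g m x :
  edge_ent (basis_comb c0 a g) m x = a m + edge_ent (commAs_comb g) m x.
Proof. by rewrite edge_entD edge_ent_alpha_comb. Qed.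

Lemma edge_var_basis_comb c0 a g (m p : 'I_D) : (m < p)%N ->
  edge_var (basis_comb c0 a g) m p z0 = -4 * g m p.
Proof.
move=> lt_mp; rewrite edge_varD edge_var_commAs_comb //.
by rewrite /edge_var !edge_ent_alpha_comb subrr add0r.
Qed.

Lemma basis_comb_eq0 c0 a g : basis_comb c0 a g = 0 ->
  [/\ c0 = 0, forall m, a m = 0 & forall i j : 'I_D, (i < j)%N -> g i j = 0].
Proof.
move=> comb0; have ent0 u v : (0 : M) u v = 0 by rewrite mxE.
have g0 (i j : 'I_D) : (i < j)%N -> g i j = 0.
  move=> lt_ij; have := edge_var_basis_comb c0 a g lt_ij.
  by rewrite comb0 /edge_var /edge_ent !ent0; lra.
split=> // [|m]; first by rewrite -(diag_ent_basis_comb c0 a g z0) comb0 /diag_ent ent0.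
have commAs0 : commAs_comb g = 0.
  by rewrite /commAs_comb big1 // => i _; rewrite big1 // => j /g0->; rewrite scale0r.
by have := edge_ent_basis_comb c0 a g m z0; rewrite comb0 commAs0 /edge_ent !ent0 addr0.
Qed.

End Combination.

Lemma free_map (K : fieldType) (vT : vectType K) (L : eqType) (F : L -> vT) (r : seq L) :
  uniq r -> (forall c : L -> K, \sum_(l <- r) c l *: F l = 0 -> {in r, forall l, c l = 0}) ->
  free (map F r).
Proof.
case: r => [|l0 r0]; first by rewrite nil_free.
set r := l0 :: r0 => r_uniq r_free.
suff : free (in_tuple (map F r)) by []; apply/freeP => k sum_k0 i.
have lt_r (j : 'I_(size (map F r))) : (j < size r)%N by rewrite -(size_map F).
pose c l := oapp k 0 (insub (index l r) : option 'I_(size (map F r))).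
have c_nth (j : 'I_(size (map F r))) : c (nth l0 r j) = k j.
  by rewrite /c index_uniq // insubT //= => ?; congr (k _); apply: val_inj.
rewrite -c_nth; apply: r_free; last exact/mem_nth/lt_r.
rewrite (big_nth l0) -(size_map F) big_mkord -[RHS]sum_k0; apply: eq_bigr => j _.
by rewrite c_nth (nth_map l0).
Qed.

Lemma count_ord_gt n k : count (fun j : 'I_n => (k < j)%N) (enum 'I_n) = (n - k.+1)%N.
Proof.
rewrite -(count_map val (fun j => k < j)%N) val_enum_ord.
by elim: n => // n IHn; rewrite -[n.+1]addn1 iotaD count_cat IHn /=; lia.
Qed.

Section BasisList.
Variables (R : realFieldType) (D : nat).
Local Notation M := 'M[R]_(nv D).
Local Notation X := (cube_basis R D).
Local Notation label := ((unit + 'I_D) + 'I_D * 'I_D)%type.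

Definition basis_elem (l : label) : M :=
  match l with
  | inl (inl _) => 1%:M
  | inl (inr k) => alpha R D k
  | inr (i, j) => commAs R D i j
  end.

Definition basis_labels : seq label :=
  [:: inl (inl tt)] ++ [seq inl (inr k) | k <- enum 'I_D]
  ++ [seq inr (i, j) | i : 'I_D <- enum 'I_D,
                       j : 'I_D <- [seq j : 'I_D <- enum 'I_D | (i < j)%N]].

Lemma cube_basis_labels : X = map basis_elem basis_labels.
Proof. by rewrite /cube_basis /basis_labels !map_cat -[in RHS]map_comp map_allpairs. Qed.

Lemma basis_labels_uniq : uniq basis_labels.
Proof.
rewrite /basis_labels cat1s cons_uniq mem_cat negb_or cat_uniq.
apply/and3P; split.
- by apply/andP; split; [apply/mapP => -[] | apply/allpairsPdep => -[? [? []]]].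
- by rewrite map_inj_uniq ?enum_uniq // => ? ? [].
apply/andP; split.
  by apply/hasPn => l /allpairsPdep[i [j [_ _ ->]]]; apply/mapP => -[].
apply: allpairs_uniq_dep => [||[? ?] [? ?] _ _ [-> ->]] //; first exact: enum_uniq.
by move=> i _; apply/filter_uniq/enum_uniq.
Qed.

Lemma sum_basis_labels (c : label -> R) :
  \sum_(l <- basis_labels) c l *: basis_elem l =
  basis_comb (c (inl (inl tt))) (fun k => c (inl (inr k))) (fun i j => c (inr (i, j))).
Proof.
rewrite /basis_labels !big_cat big_seq1 big_map big_allpairs_dep /basis_comb /alpha_comb /=.
rewrite addrA big_enum /commAs_comb big_enum; congr (_ + _ + _); apply: eq_bigr => i _.
by rewrite big_filter big_enum_cond.
Qed.

Lemma memv_basis_comb c0 a g : basis_comb c0 a g \in <<X>>%VS.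
Proof.
pose c (l : label) := match l with inl (inl _) => c0 | inl (inr k) => a k | inr (i, j) => g i j end.
have -> : basis_comb c0 a g = \sum_(l <- basis_labels) c l *: basis_elem l.
  by rewrite sum_basis_labels.
rewrite big_seq; apply: memv_suml => l l_in; apply/memvZ/memv_span.
by rewrite cube_basis_labels map_f.
Qed.

Lemma span_A_like B : B \in <<X>>%VS -> A_like R D B.
Proof.
suff basis_A C : C \in X -> A_like R D C.
  move/(@coord_span _ _ _ (in_tuple X))->; apply: A_like_sum => i _.
  exact/A_likeZ/basis_A/mem_nth.
rewrite cube_basis_labels => /mapP[[[[]|k]|[? ?]] _ ->].
- exact: A_like1.
- exact: A_like_alpha.
- exact: A_like_commAs.
Qed.

Lemma A_like_basis_comb B : A_like R D B -> exists c0 a g, B = basis_comb c0 a g.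
Proof.
move=> B_A.
pose g i j := - edge_var B i j (cube0 D) / 4.
pose a m := edge_ent B m (cube0 D) - edge_ent (commAs_comb g) m (cube0 D).
exists (diag_ent B (cube0 D)), a, g.
apply: A_like_eq => // [||m|m p lt_mp]; first exact/span_A_like/memv_basis_comb.
- by rewrite diag_ent_basis_comb.
- by rewrite edge_ent_basis_comb subrK.
- by rewrite edge_var_basis_comb // /g; lra.
Qed.

Lemma cube_basis_free : free X.
Proof.
rewrite cube_basis_labels; apply: free_map basis_labels_uniq _ => c.
rewrite sum_basis_labels => /basis_comb_eq0[c0 a0 g0] l.
rewrite !mem_cat => /or3P[|/mapP[k _ ->] //|/allpairsPdep[i [j [_ lt_ij ->]]]].
  by rewrite inE => /eqP->.
by apply: g0; move: lt_ij; rewrite mem_filter => /andP[].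
Qed.

Lemma size_cube_basis : size X = (1 + D + 'C(D, 2))%N.
Proof.
rewrite /cube_basis !size_cat size_map size_enum_ord size_allpairs_dep addnA.
congr (_ + _)%N; rewrite sumnE big_map big_enum -bin2_sum big_nat_rev big_mkord.
by apply: eq_bigr => i _; rewrite size_filter count_ord_gt.
Qed.

End BasisList.

Theorem corollary9p8 (R : realFieldType) (D : nat) (hD : (1 <= D)%N) :
  free (cube_basis R D)
  /\ (forall B : 'M[R]_(nv D), A_like R D B <-> B \in <<cube_basis R D>>%VS)
  /\ \dim <<cube_basis R D>>%VS = (1 + D + 'C(D, 2))%N.
Proof.
have basis_free := cube_basis_free R D.
split=> //; split; last by rewrite (eqP basis_free) size_cube_basis.
move=> B; split=> [/A_like_basis_comb[c0 [a [g ->]]] | /span_A_like //].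
exact: memv_basis_comb.
Qed.
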